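(* (1) For disjoint finite sets $X,Y$, $f\in\mathrm{Bool}(X)$, $g\in\mathrm{Bool}(Y)$: $f\star_1g$ is rigid iff $f$ and $g$ are rigid. (2) If $f\in\mathrm{Bool}(X)$ is rigid then $f_{\mid Y}$ is rigid for every $Y\subseteq X$. (3) If $f\in\mathrm{Bool}(X)$ is rigid and $\sim\in\mathcal{E}^W(f)$, then $f/{\sim}$ is rigid.
   Context: A boolean function on a finite set $X$ is a map $f:\mathcal{P}(X)\to\mathbb{Z}$ with $f(\emptyset)=0$; $\mathrm{Bool}(X)$ is their set; $f_{\mid Y}$ is the restriction to $\mathcal{P}(Y)$. For disjoint $X,Y$, $(f\star_1g)(A)=f(A\cap X)+g(A\cap Y)$ (associative, commutative, unit $1\in\mathrm{Bool}(\emptyset)$). For nonempty $X$, $f$ is indecomposable if $f=f'\star_1f''$ with $f'\in\mathrm{Bool}(X\setminus Y)$, $f''\in\mathrm{Bool}(Y)$ forces $Y\in\{\emptyset,X\}$. Each $f$ determines a unique equivalence $\sim_f^i$ with $f=\prod^{\star_1}_{Y\in X/\sim_f^i}f_{\mid Y}$ and each $f_{\mid Y}$ indecomposable; its classes are the indecomposable components of $f$ and $\mathrm{ic}(f)$ is their number. For an equivalence $\sim$: $\mathrm{cl}(\sim)=|X/{\sim}|$, $\varpi_\sim$ the canonical surjection, $f/{\sim}(A)=f(\varpi_\sim^{-1}(A))$, $(f\mid\sim)(A)=\sum_{Y\in X/\sim}f(A\cap Y)$; $\mathcal{E}^W(f)=\{\sim:\mathrm{ic}(f\mid\sim)=\mathrm{cl}(\sim)\}$.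 An indecomposable $f$ is rigid if for all disjoint $A,B\subseteq X$ with $f(A\sqcup B)=f(A)+f(B)$, one has $f(A'\sqcup B')=f(A')+f(B')$ for all $A'\subseteq A$, $B'\subseteq B$; a general $f$ is rigid if $f_{\mid Y}$ is rigid for each indecomposable component $Y$. *)

From mathcomp Require Import all_boot all_order all_algebra.
Set Implicit Arguments. Unset Strict Implicit. Unset Printing Implicit Defensive.
Import GRing.Theory Num.Theory.
Local Open Scope ring_scope.

(* A boolean function on a finite set X (a finite subset of a finType T) is
   represented by f : {set T} -> int; only its values on subsets of X matter. *)
Definition boolfun (T : finType) (f : {set T} -> int) : Prop := f set0 = 0.

Definition bstar (T : finType) (X Y : {set T}) (f g : {set T} -> int)
  : {set T} -> int := fun A => f (A :&: X) + g (A :&: Y).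

Definition indecomposable (T : finType) (X : {set T}) (f : {set T} -> int)
  : Prop :=
  X != set0 /\
  forall (Y : {set T}) (f' f'' : {set T} -> int),
    Y \subset X -> boolfun f' -> boolfun f'' ->
    (forall A : {set T}, A \subset X -> f A = bstar (X :\: Y) Y f' f'' A) ->
    Y = set0 \/ Y = X.

Definition ic_partition (T : finType) (X : {set T}) (f : {set T} -> int)
  (P : {set {set T}}) : Prop :=
  partition P X /\
  (forall A : {set T}, A \subset X -> f A = \sum_(Y in P) f (A :&: Y)) /\
  (forall Y, Y \in P -> indecomposable Y f).

Definition ic_eq (T : finType) (X : {set T}) (f : {set T} -> int) (n : nat)
  : Prop := exists P, ic_partition X f P /\ #|P| = n.

Definition rigid_indec (T : finType) (X : {set T}) (f : {set T} -> int)
  : Prop :=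
  forall A B : {set T}, A \subset X -> B \subset X -> [disjoint A & B] ->
    f (A :|: B) = f A + f B ->
    forall A' B' : {set T}, A' \subset A -> B' \subset B ->
      f (A' :|: B') = f A' + f B'.

Definition rigid (T : finType) (X : {set T}) (f : {set T} -> int) : Prop :=
  forall P, ic_partition X f P -> forall Y, Y \in P -> rigid_indec Y f.

(* For an equivalence on X given by its set of classes P (partition P X):
   (f | ~)(A) = sum_{Y in X/~} f (A :&: Y) *)
Definition fres (T : finType) (P : {set {set T}}) (f : {set T} -> int)
  : {set T} -> int := fun A => \sum_(Y in P) f (A :&: Y).

(* f / ~ : a boolean function on X/~ = P; the preimage of B \subset P under
   the canonical surjection is cover B *)
Definition fquot (T : finType) (P : {set {set T}}) (f : {set T} -> int)
  : {set {set T}} -> int := fun B => f (cover B).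

Definition EW (T : finType) (X : {set T}) (f : {set T} -> int)
  (P : {set {set T}}) : Prop := ic_eq X (fres P f) #|P|.

From mathcomp Require Import all_boot all_order all_algebra.
From Stdlib Require Import Classical.
Set Implicit Arguments. Unset Strict Implicit. Unset Printing Implicit Defensive.
Import GRing.Theory.
Local Open Scope ring_scope.

(* Since f is additive along its indecomposable components, an indecomposable
   set Z cannot meet two of them and so lies inside one.  Hence f is rigid on X
   iff it is rigid on every indecomposable Z included in X; this gives (2) at
   once, and (1) because f *_1 g is additive across Y.
   For (3), f | ~ is additive along the classes of ~, so its components refine
   them, and ic(f | ~) = cl(~) forces each class to be a component.  Each class
   is then indecomposable for f, hence contained in a component of f, and an
   indecomposable family W of classes for f / ~ is carried by a single
   component C of f.  The rigidity of f on C transfers to f / ~ on W through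
   B |-> cover B, which preserves unions and disjointness. *)

Section Rigidity.
Variable T : finType.
Implicit Types (X Y Z S A B C : {set T}) (f g h : {set T} -> int).
Implicit Types (P Q W : {set {set T}}).

Definition agree_on X f g := forall A, A \subset X -> f A = g A.

Definition splits X S f := forall A, A \subset X -> f A = f (A :\: S) + f (A :&: S).

Lemma agree_onW X Y f g : Y \subset X -> agree_on X f g -> agree_on Y f g.
Proof. by move=> sYX fg A sAY; apply: fg (subset_trans sAY sYX). Qed.

Lemma agree_on_sym X f g : agree_on X f g -> agree_on X g f.
Proof. by move=> fg A sAX; rewrite fg. Qed.

Lemma indecomposable_agree X f g :
  agree_on X f g -> indecomposable X f -> indecomposable X g.
Proof.
move=> fg [X0 indf]; split=> // Y f' f'' sYX f'0 f''0 decg.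
by apply: (indf Y f' f'') => // A sAX; rewrite fg // decg.
Qed.

Lemma rigid_indec_agree X f g :
  agree_on X f g -> rigid_indec X f -> rigid_indec X g.
Proof.
move=> fg rigf A B sAX sBX dAB eqAB A' B' sA'A sB'B.
have [sA'X sB'X] := (subset_trans sA'A sAX, subset_trans sB'B sBX).
rewrite -!fg ?subUset ?sA'X ?sB'X //; apply: (rigf A B) => //.
by rewrite !fg ?subUset ?sAX ?sBX.
Qed.

Lemma rigid_indecW X Y f : Y \subset X -> rigid_indec X f -> rigid_indec Y f.
Proof. by move=> sYX rigf A B sAY sBY; apply: rigf; apply: subset_trans sYX. Qed.

Lemma splitsW X Y S f : Y \subset X -> splits X S f -> splits Y S f.
Proof. by move=> sYX splitf A sAY; apply: splitf (subset_trans sAY sYX). Qed.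

Lemma splits_agree X S f g : agree_on X f g -> splits X S g -> splits X S f.
Proof.
move=> fg splitg A sAX.
rewrite !fg ?(subset_trans (subsetDl _ _) sAX) ?(subset_trans (subsetIl _ _) sAX) //.
exact: splitg.
Qed.

Lemma bstar_splits X Y f g : [disjoint X & Y] -> boolfun f -> boolfun g ->
  splits [set: T] Y (bstar X Y f g).
Proof.
move=> dXY f0 g0 A _; rewrite /bstar.
have -> : (A :\: Y) :&: X = A :&: X.
  by rewrite setIDAC; apply/setDidPl; apply: disjointWl (subsetIr A X) dXY.
have -> : (A :\: Y) :&: Y = set0 by rewrite setIDAC setDIl setDv setI0.
have -> : (A :&: Y) :&: X = set0.
  by rewrite -setIA [Y :&: X]setIC (disjoint_setI0 dXY) setI0.
by rewrite -setIA setIid f0 g0 addr0 add0r.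
Qed.

Lemma indecomposable_splits Z S f : boolfun f -> indecomposable Z f ->
  splits Z S f -> Z \subset S \/ [disjoint Z & S].
Proof.
move=> f0 [_ indZ] splitZ.
case: (indZ (Z :&: S) f f (subsetIl _ _) f0 f0) => [A sAZ | ZS0 | /setIidPl];
  [| by right; rewrite -setI_eq0 ZS0 | by left].
by rewrite /bstar setDIr setDv set0U setIDA setIA (setIidPl sAZ) -splitZ.
Qed.

Lemma decomposable_splits X f : X != set0 -> ~ indecomposable X f ->
  exists2 Y : {set T}, Y \proper X /\ Y != set0 & splits X Y f.
Proof.
move=> X0 decX; apply: NNPP => noY; apply: decX.
split=> // Y f' f'' sYX f'0 f''0 decf.
have [-> | Y0] := eqVneq Y set0; first by left.
have [-> | YX] := eqVneq Y X; first by right.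
exfalso; apply: noY; exists Y; first by rewrite properEneq YX sYX.
apply: splits_agree decf _; apply: splitsW (subsetT X) (bstar_splits _ f'0 f''0).
by rewrite disjoints_subset setDE subsetIr.
Qed.

Lemma splits_block P X C f : boolfun f -> trivIset P -> C \in P ->
  (forall A, A \subset X -> f A = \sum_(D in P) f (A :&: D)) -> splits X C f.
Proof.
move=> f0 tiP CP decf A sAX.
rewrite [f A]decf // [f (A :\: C)]decf ?(subset_trans (subsetDl _ _) sAX) //.
rewrite !(bigD1 C CP) /= [(A :\: C) :&: C]setIDAC setDIl setDv setI0 f0 add0r.
rewrite addrC; congr (_ + _).
apply: eq_bigr => D /andP[DP DC]; rewrite setIDAC (setDidPl _) //.
exact: disjointWl (subsetIr A D) (trivIsetP tiP D C DP CP DC).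
Qed.

Lemma indecomposable_sub_block P X f Z : boolfun f -> partition P X ->
  (forall A, A \subset X -> f A = \sum_(C in P) f (A :&: C)) ->
  Z \subset X -> indecomposable Z f -> exists2 C, C \in P & Z \subset C.
Proof.
move=> f0 partP decf sZX indZ; have [/set0Pn[z zZ] _] := indZ.
have zP : z \in cover P by rewrite (cover_partition partP) (subsetP sZX).
exists (pblock P z); first exact: pblock_mem.
have splitZ :=
  splitsW sZX (splits_block f0 (partition_trivIset partP) (pblock_mem zP) decf).
case: (indecomposable_splits f0 indZ splitZ) => // /disjointFr/(_ zZ).
by rewrite mem_pblock zP.
Qed.

Lemma partition_disjoint P1 P2 X1 X2 : [disjoint X1 & X2] ->
  partition P1 X1 -> partition P2 X2 -> [disjoint P1 & P2].
Proof.
move=> dX part1 part2; apply/pred0P => C /=; apply/andP => -[C1 C2].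
have /set0Pn[x xC] := partition_neq0 part1 C1.
have := disjointFr dX (subsetP (partitionS part1 C1) x xC).
by rewrite (subsetP (partitionS part2 C2) x xC).
Qed.

Lemma partitionU P1 P2 X1 X2 : [disjoint X1 & X2] ->
  partition P1 X1 -> partition P2 X2 -> partition (P1 :|: P2) (X1 :|: X2).
Proof.
move=> dX part1 part2.
have [cov1 cov2] := (cover_partition part1, cover_partition part2).
apply/and3P; split.
- by rewrite /cover bigcup_setU -!/(cover _) cov1 cov2.
- apply: trivIsetU (partition_trivIset part1) (partition_trivIset part2) _.
  by rewrite cov1 cov2.
- by rewrite inE (partition0 part1) (partition0 part2).
Qed.

Lemma ic_partitionU X1 X2 f P1 P2 : [disjoint X1 & X2] ->
  splits (X1 :|: X2) X1 f -> ic_partition X1 f P1 -> ic_partition X2 f P2 ->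
  ic_partition (X1 :|: X2) f (P1 :|: P2).
Proof.
move=> dX splitf [part1 [dec1 ind1]] [part2 [dec2 ind2]].
split; first exact: partitionU.
split=> [A sAX | C /setUP[]]; [| exact: ind1 | exact: ind2].
rewrite (eq_bigl [predU P1 & P2]) => [|C]; last by rewrite !inE.
rewrite bigU ?(partition_disjoint dX) //= splitf // addrC.
have sAX2 : A :\: X1 \subset X2 by rewrite subDset.
rewrite [f (A :&: X1)]dec1 ?subsetIr // [f (A :\: X1)]dec2 //.
congr (_ + _); apply: eq_bigr => C CP.
  rewrite setIDAC (setDidPl _) //; apply: disjointWl (subsetIr A C) _.
  by rewrite disjoint_sym (disjointWr (partitionS part2 CP)).
by rewrite -setIA (setIidPr (partitionS part1 CP)).
Qed.

Lemma ic_partition_exists X f : boolfun f -> exists P, ic_partition X f P.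
Proof.
move=> f0; have [n] := ubnP #|X|; elim: n X => // n IH X; rewrite ltnS => leXn.
have [-> | X0] := eqVneq X set0.
  exists set0; split; first by rewrite partition_set0.
  split=> [A | C]; last by rewrite inE.
  by rewrite subset0 => /eqP->; rewrite big_set0.
have [indX | decX] := classic (indecomposable X f).
  exists [set X]; split; first by rewrite /partition cover1 trivIset1 inE eq_sym X0 eqxx.
  by split=> [A sAX | C /set1P->]; rewrite ?big_set1 ?(setIidPl sAX).
have [Y [ltYX Y0] splitY] := decomposable_splits X0 decX.
have sYX := proper_sub ltYX.
have [P1 ic1] := IH Y (leq_trans (proper_card ltYX) leXn).
have [P2 ic2] : exists P, ic_partition (X :\: Y) f P.
  apply: IH; rewrite (cardsDS sYX); apply: leq_trans leXn.
  by rewrite ltn_subrL !card_gt0 Y0 X0.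
exists (P1 :|: P2); rewrite -{1 2}(setID X Y) (setIidPr sYX) in splitY *.
apply: ic_partitionU => //.
by rewrite disjoint_sym disjoints_subset setDE subsetIr.
Qed.

Lemma rigidP X f : boolfun f ->
  rigid X f <-> forall Z, Z \subset X -> indecomposable Z f -> rigid_indec Z f.
Proof.
move=> f0; split=> [rigf Z sZX indZ | rigZ P [partP [_ indP]] C CP]; last first.
  exact: rigZ (partitionS partP CP) (indP C CP).
have [P icP] := ic_partition_exists X f0; have [partP [decf _]] := icP.
have [C CP sZC] := indecomposable_sub_block f0 partP decf sZX indZ.
exact: rigid_indecW sZC (rigf P icP C CP).
Qed.

Lemma rigid_agree X f g : boolfun f -> agree_on X f g -> rigid X f -> rigid X g.
Proof.
move=> f0 fg /(rigidP _ f0) rigf.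
have g0 : boolfun g by rewrite /boolfun -fg ?sub0set.
apply/(rigidP _ g0) => Z sZX indZ; have fgZ := agree_onW sZX fg.
exact: rigid_indec_agree fgZ (rigf Z sZX (indecomposable_agree (agree_on_sym fgZ) indZ)).
Qed.

Lemma rigidS X Y f : boolfun f -> rigid X f -> Y \subset X -> rigid Y f.
Proof.
move=> f0 /(rigidP _ f0) rigf sYX; apply/(rigidP _ f0) => Z sZY.
exact: rigf (subset_trans sZY sYX).
Qed.

Lemma bstar_agree_onl X Y f g : [disjoint X & Y] -> boolfun g ->
  agree_on X (bstar X Y f g) f.
Proof.
move=> dXY g0 A sAX.
by rewrite /bstar (setIidPl sAX) (disjoint_setI0 (disjointWl sAX dXY)) g0 addr0.
Qed.

Lemma bstar_agree_onr X Y f g : [disjoint X & Y] -> boolfun f ->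
  agree_on Y (bstar X Y f g) g.
Proof.
move=> dXY f0 A sAY; rewrite disjoint_sym in dXY.
by rewrite /bstar (setIidPl sAY) (disjoint_setI0 (disjointWl sAY dXY)) f0 add0r.
Qed.

Lemma rigid_bstar X Y f g : [disjoint X & Y] -> boolfun f -> boolfun g ->
  rigid (X :|: Y) (bstar X Y f g) <-> rigid X f /\ rigid Y g.
Proof.
move=> dXY f0 g0; set h := bstar X Y f g.
have h0 : boolfun h by rewrite /boolfun /h /bstar !set0I f0 g0 addr0.
have [hf hg] := (bstar_agree_onl f dXY g0, bstar_agree_onr g dXY f0).
split=> [righ | [rigf rigg]].
  by split; apply: rigid_agree h0 _ (rigidS h0 righ _); rewrite ?subsetUl ?subsetUr.
apply/(rigidP _ h0) => Z sZXY indZ.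
have rigid_from S (k : {set T} -> int) :
    boolfun k -> agree_on S h k -> rigid S k -> Z \subset S -> rigid_indec Z h.
  move=> k0 hk /(rigidP _ k0) rigk sZS; have hkZ := agree_onW sZS hk.
  apply: rigid_indec_agree (agree_on_sym hkZ) (rigk Z sZS _).
  exact: indecomposable_agree hkZ indZ.
have splitZ := splitsW (subsetT Z) (bstar_splits dXY f0 g0).
have [sZY | dZY] := indecomposable_splits h0 indZ splitZ.
  exact: rigid_from g0 hg rigg sZY.
apply: rigid_from f0 hf rigf _.
by rewrite -(setIidPl sZXY) setIUr (disjoint_setI0 dZY) setU0 subsetIr.
Qed.

Lemma fres_agree_on P Y f : boolfun f -> trivIset P -> Y \in P ->
  agree_on Y (fres P f) f.
Proof.
move=> f0 tiP YP A sAY; rewrite /fres (bigD1 Y YP) /= (setIidPl sAY) big1 ?addr0 //.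
move=> C /andP[CP CY]; rewrite (disjoint_setI0 _) //.
by apply: disjointWl sAY (trivIsetP tiP Y C YP CP _); rewrite eq_sym.
Qed.

Lemma partition_refine_card P Q X : partition P X -> partition Q X ->
  {in Q, forall Z, exists2 Y, Y \in P & Z \subset Y} -> #|Q| = #|P| ->
  P \subset Q.
Proof.
move=> partP partQ refQ cardQP; have tiP := partition_trivIset partP.
have inQ x : x \in X -> x \in cover Q by rewrite (cover_partition partQ).
pose up Z := odflt set0 [pick Y in P | Z \subset Y].
have upP Z : Z \in Q -> up Z \in P /\ Z \subset up Z.
  move=> ZQ; rewrite /up; case: pickP => [Y /andP[] // | noY].
  by have [Y YP sZY] := refQ Z ZQ; have := noY Y; rewrite YP sZY.
have up_pblock Y y : Y \in P -> y \in Y -> up (pblock Q y) = Y.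
  move=> YP yY; have yQ := inQ y (subsetP (partitionS partP YP) y yY).
  have [upQ sQup] := upP _ (pblock_mem yQ).
  by rewrite -(def_pblock tiP YP yY) (def_pblock tiP upQ (subsetP sQup y _)) ?mem_pblock.
have sP_upQ : P \subset up @: Q.
  apply/subsetP => Y YP; have /set0Pn[y yY] := partition_neq0 partP YP.
  rewrite -(up_pblock Y y) // imset_f // pblock_mem // inQ //.
  exact: subsetP (partitionS partP YP) y yY.
have up_inj : {in Q &, injective up}.
  by apply/imset_injP; rewrite eqn_leq leq_imset_card cardQP subset_leq_card.
apply/subsetP => Y YP; have /set0Pn[y yY] := partition_neq0 partP YP.
have pblockQ z : z \in Y -> pblock Q z \in Q.
  by move=> zY; rewrite pblock_mem // inQ // (subsetP (partitionS partP YP)).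
suff -> : Y = pblock Q y by apply: pblockQ.
apply/eqP; rewrite eqEsubset; apply/andP; split.
  apply/subsetP => z zY; rewrite -(up_inj _ _ (pblockQ z zY) (pblockQ y yY)).
    by rewrite mem_pblock inQ // (subsetP (partitionS partP YP)).
  by rewrite (up_pblock Y z) // (up_pblock Y y).
by rewrite -(up_pblock Y y) //; case: (upP _ (pblockQ y yY)).
Qed.

Lemma EW_indecomposable_blocks X f P : boolfun f -> partition P X -> EW X f P ->
  {in P, forall Y, indecomposable Y f}.
Proof.
move=> f0 partP [Q [[partQ [_ indQ]] cardQ]] Y YP.
have tiP := partition_trivIset partP.
have fres0 : boolfun (fres P f) by rewrite /boolfun /fres big1 // => C _; rewrite set0I.
have dec_fres A : A \subset X -> fres P f A = \sum_(C in P) fres P f (A :&: C).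
  by move=> _; apply: eq_bigr => C CP; rewrite (fres_agree_on f0 tiP CP) ?subsetIr.
have sPQ : P \subset Q.
  apply: (partition_refine_card partP partQ _ cardQ) => Z ZQ.
  exact: indecomposable_sub_block fres0 partP dec_fres (partitionS partQ ZQ) (indQ Z ZQ).
exact: indecomposable_agree (fres_agree_on f0 tiP YP) (indQ Y (subsetP sPQ Y YP)).
Qed.

Lemma cover_subset P Q : P \subset Q -> cover P \subset cover Q.
Proof. by move=> sPQ; apply/bigcupsP => Y YP; apply: bigcup_sup (subsetP sPQ Y YP). Qed.

Lemma cover_disjoint P Q W : trivIset P -> Q \subset P -> W \subset P ->
  [disjoint Q & W] -> [disjoint cover Q & cover W].
Proof.
move=> tiP sQP sWP dQW; apply/bigcup_disjointP => Y YW; rewrite disjoint_sym.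
apply/bigcup_disjointP => Y' Y'Q.
apply: (trivIsetP tiP _ _ (subsetP sWP Y YW) (subsetP sQP Y' Y'Q)).
by apply: contraTneq Y'Q => <-; rewrite (disjointFl dQW YW).
Qed.

End Rigidity.

Section Quotient.
Variable T : finType.
Implicit Types (X Y C : {set T}) (f : {set T} -> int) (P W : {set {set T}}).

Lemma fquot_splits P X C f : partition P X -> splits X C f ->
  {in P, forall Y, Y \subset C \/ [disjoint Y & C]} ->
  splits P [set Y : {set T} | Y \subset C] (fquot P f).
Proof.
move=> partP splitf dichP B sBP.
have sBX : cover B \subset X by rewrite -(cover_partition partP) cover_subset.
rewrite /fquot (splitf _ sBX); congr (f _ + f _); apply/setP => x; rewrite !inE.
- apply/andP/bigcupP => [[xC /bigcupP[Y YB xY]] | [Y]].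
    by exists Y; rewrite // !inE YB andbT; apply: contraNN xC => /subsetP->.
  rewrite !inE => /andP[sYC YB] xY; split; last by apply/bigcupP; exists Y.
  case: (dichP Y (subsetP sBP Y YB)) => [sYC' | dYC]; first by rewrite sYC' in sYC.
  by rewrite (disjointFr dYC xY).
- apply/andP/bigcupP => [[/bigcupP[Y YB xY] xC] | [Y]].
    exists Y => //; rewrite !inE YB /=.
    case: (dichP Y (subsetP sBP Y YB)) => // dYC.
    by rewrite (disjointFr dYC xY) in xC.
  rewrite !inE => /andP[YB sYC] xY; split; first by apply/bigcupP; exists Y.
  exact: subsetP sYC x xY.
Qed.

Lemma rigid_indec_fquot P W f : trivIset P -> W \subset P ->
  rigid_indec (cover W) f -> rigid_indec W (fquot P f).
Proof.
move=> tiP sWP rigW A B sAW sBW dAB.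
rewrite /fquot /cover !bigcup_setU -!/(cover _) => eqAB A' B' sA'A sB'B.
rewrite /cover !bigcup_setU -!/(cover _).
apply: (rigW (cover A) (cover B)); rewrite ?cover_subset //.
exact: cover_disjoint tiP (subset_trans sAW sWP) (subset_trans sBW sWP) dAB.
Qed.

Lemma rigid_fquot X f P : boolfun f -> rigid X f -> partition P X -> EW X f P ->
  rigid P (fquot P f).
Proof.
move=> f0 rigf partP EWP.
have fquot0 : boolfun (fquot P f) by rewrite /boolfun /fquot /cover big_set0.
have indP := EW_indecomposable_blocks f0 partP EWP.
have [P0 icP0] := ic_partition_exists X f0; have [partP0 [decf _]] := icP0.
apply/(rigidP _ fquot0) => W sWP indW; have [/set0Pn[Y0 Y0W] _] := indW.
have Y0P := subsetP sWP Y0 Y0W.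
have [C0 C0P sY0C0] :=
  indecomposable_sub_block f0 partP0 decf (partitionS partP Y0P) (indP Y0 Y0P).
have splitC0 := splits_block f0 (partition_trivIset partP0) C0P decf.
have dichP : {in P, forall Y, Y \subset C0 \/ [disjoint Y & C0]}.
  move=> Y YP; apply: indecomposable_splits f0 (indP Y YP) _.
  exact: splitsW (partitionS partP YP) splitC0.
have splitW := splitsW sWP (fquot_splits partP splitC0 dichP).
have [sWC0 | dWC0] := indecomposable_splits fquot0 indW splitW; last first.
  by have := disjointFr dWC0 Y0W; rewrite inE sY0C0.
apply: rigid_indec_fquot (partition_trivIset partP) sWP _.
apply: rigid_indecW (rigf P0 icP0 C0 C0P).
by apply/bigcupsP => Y /(subsetP sWC0); rewrite inE.
Qed.

End Quotient.

Theorem lemma4p11 :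
  (forall (T : finType) (X Y : {set T}) (f g : {set T} -> int),
      [disjoint X & Y] -> boolfun f -> boolfun g ->
      (rigid (X :|: Y) (bstar X Y f g) <-> rigid X f /\ rigid Y g)) /\
  (forall (T : finType) (X Y : {set T}) (f : {set T} -> int),
      boolfun f -> rigid X f -> Y \subset X -> rigid Y f) /\
  (forall (T : finType) (X : {set T}) (f : {set T} -> int)
          (P : {set {set T}}),
      boolfun f -> rigid X f -> partition P X -> EW X f P ->
      rigid P (fquot P f)).
Proof. by split; [exact: rigid_bstar | split; [exact: rigidS | exact: rigid_fquot]]. Qed.
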